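(* Let $A$ be a T-brace and let $a\in\zeta_2(\star,A)$. If $a$ has infinite order in $(A,+)$, then $x\star a\in\langle a\star a\rangle$ and $a\star x\in\langle a\star a\rangle$ for all $x\in A$, where $\langle a\star a\rangle$ denotes the cyclic subgroup of $(A,+)$ generated by $a\star a$.
   Context: A (left) brace is a set $A$ with two operations $+$ and $\cdot$ such that $(A,+)$ is an abelian group, $(A,\cdot)$ is a group, and $a(b+c)=ab+ac-a$ for all $a,b,c\in A$. Put $a\star b=ab-a-b$. A subbrace is a subset which is a subgroup of both $(A,+)$ and $(A,\cdot)$; a subbrace $L$ is an ideal if $a\star z, z\star a\in L$ for all $a\in A$, $z\in L$, and then the quotient brace $A/L$ is defined. $A$ is a T-brace if whenever $I$ is an ideal of $J$ and $J$ is an ideal of $A$, then $I$ is an ideal of $A$. The $\star$-center is $\zeta(\star,A)=\{a: a\star x=x\star a=0\ \forall x\}$; $\zeta_2(\star,A)$ is given by $\zeta_2(\star,A)/\zeta(\star,A)=\zeta(\star,A/\zeta(\star,A))$. *)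

From mathcomp Require Import all_boot all_algebra.
Set Implicit Arguments. Unset Strict Implicit. Unset Printing Implicit Defensive.
Import GRing.Theory.
Local Open Scope ring_scope.

Record is_brace (A : zmodType) (mul : A -> A -> A) (one : A) (inv : A -> A)
  : Prop := {
  brace_mulA : forall a b c, mul a (mul b c) = mul (mul a b) c;
  brace_mul1l : forall a, mul one a = a;
  brace_mul1r : forall a, mul a one = a;
  brace_mulVl : forall a, mul (inv a) a = one;
  brace_mulVr : forall a, mul a (inv a) = one;
  brace_law : forall a b c, mul a (b + c) = mul a b + mul a c - a
}.

Definition star (A : zmodType) (mul : A -> A -> A) (a b : A) : A :=
  mul a b - a - b.

Definition subbrace (A : zmodType) (mul : A -> A -> A) (one : A)
  (inv : A -> A) (S : A -> Prop) : Prop :=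
  [/\ S 0, (forall x y, S x -> S y -> S (x - y)),
      S one, (forall x y, S x -> S y -> S (mul x y))
    & (forall x, S x -> S (inv x))].

(* Taking J = the whole of A gives the ideals of A. *)
Definition ideal_of (A : zmodType) (mul : A -> A -> A) (one : A)
  (inv : A -> A) (J I : A -> Prop) : Prop :=
  [/\ subbrace mul one inv I, (forall z, I z -> J z)
    & forall a z, J a -> I z -> I (star mul a z) /\ I (star mul z a)].

Definition T_brace (A : zmodType) (mul : A -> A -> A) (one : A)
  (inv : A -> A) : Prop :=
  forall I J : A -> Prop,
    ideal_of mul one inv (fun _ => True) J ->
    ideal_of mul one inv J I ->
    ideal_of mul one inv (fun _ => True) I.

Definition star_center (A : zmodType) (mul : A -> A -> A) (a : A) : Prop :=
  forall x, star mul a x = 0 /\ star mul x a = 0.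

(* zeta_2(star, A): a + zeta is in the star-center of A/zeta; in the quotient
   brace (a+L) * (x+L) = (a * x) + L, so this unfolds to the following. *)
Definition star_center2 (A : zmodType) (mul : A -> A -> A) (a : A) : Prop :=
  forall x, star_center mul (star mul a x) /\ star_center mul (star mul x a).

Definition in_cyclic (A : zmodType) (g y : A) : Prop :=
  exists k : int, y = g *~ k.

(* Let J = <a> + zeta(star, A) and I = <a, a star a> (additive subgroups).  Since
   a lies in zeta_2, J is an ideal of A and I is an ideal of J, so in a T-brace I
   is an ideal of A and contains x star a and a star x, which are central.  If a
   central w = k a + m (a star a) is one of these, then k a = w - m (a star a) is
   central too, so k (a star a) = a star (k a) = 0 and k w = 0; hence
   k^2 a = k w = 0, and k = 0 because a has infinite order. *)
From HB Require Import structures.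
From mathcomp Require Import all_boot all_algebra.

Set Implicit Arguments.
Unset Strict Implicit.
Unset Printing Implicit Defensive.

Import GRing.Theory.
Local Open Scope ring_scope.

Lemma additive_mulrz (A B : zmodType) (f : A -> B)
  (fD : forall x y, f (x + y) = f x + f y) x (k : int) :
  f (x *~ k) = f x *~ k.
Proof.
have fB : zmod_morphism f by move=> u v; apply: (addIr (f v)); rewrite -fD !subrK.
exact: (raddfMz (HB.pack f (GRing.isZmodMorphism.Build _ _ f fB))).
Qed.

Lemma mulrz_eq0_infinite_order (A : zmodType) (a : A) (k : int) :
  (forall n : nat, (0 < n)%N -> a *+ n != 0) -> a *~ k = 0 -> k = 0.
Proof.
move=> a_inf; case: k => n ank0; last first.
  by move: ank0; rewrite NegzE mulrNz => /eqP; rewrite oppr_eq0 (negPf (a_inf _ _)).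
by case: n ank0 => // n /eqP; rewrite (negPf (a_inf _ _)).
Qed.

Section AdditiveSubgroup.

Variables (A : zmodType) (S : A -> Prop).

Definition additive_subgroup := S 0 /\ forall x y, S x -> S y -> S (x - y).

Hypothesis subS : additive_subgroup.

Lemma subgroupN x : S x -> S (- x).
Proof. by case: subS => S0 SB Sx; rewrite -sub0r; apply: SB. Qed.

Lemma subgroupD x y : S x -> S y -> S (x + y).
Proof.
by case: subS => _ SB Sx Sy; rewrite -[y]opprK; apply: SB => //; apply: subgroupN.
Qed.

Lemma subgroupMz x (k : int) : S x -> S (x *~ k).
Proof.
case: subS => S0 _ Sx; elim/int_rec: k => [|n IH|n IH]; first by rewrite mulr0z.
  by rewrite intS mulrzDr mulr1z; apply: subgroupD.
by rewrite intS opprD mulrzDr mulrN1z; apply: subgroupD => //; apply: subgroupN.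
Qed.

End AdditiveSubgroup.

Section Brace.

Variables (A : zmodType) (mul : A -> A -> A) (one : A) (inv : A -> A).
Hypothesis HA : is_brace mul one inv.

Definition lam (u y : A) : A := mul u y - u.

Local Notation star := (star mul).
Local Notation Z := (star_center mul).

Lemma mul_lam u v : mul u v = u + lam u v.
Proof. by rewrite /lam addrC subrK. Qed.

Lemma star_lam u y : star u y = lam u y - y.
Proof. by []. Qed.

Lemma lam_star u y : lam u y = y + star u y.
Proof. by rewrite star_lam addrC subrK. Qed.

Lemma brace_mulr0 u : mul u 0 = u.
Proof.
have := brace_law HA u 0 0; rewrite addr0 => E.
by apply: (addrI (mul u 0)); rewrite [in RHS]E subrK.
Qed.

Lemma brace_one0 : one = 0.
Proof.
have := brace_mulVl HA 0; rewrite brace_mulr0 => V0.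
by have := brace_mulVr HA 0; rewrite V0 (brace_mul1r HA).
Qed.

Lemma lamD u y y' : lam u (y + y') = lam u y + lam u y'.
Proof. by rewrite /lam (brace_law HA) !addrA (addrAC (mul u y)). Qed.

Lemma lamMz u y (k : int) : lam u (y *~ k) = lam u y *~ k.
Proof. exact: (additive_mulrz (lamD u)). Qed.

Lemma lamN u y : lam u (- y) = - lam u y.
Proof. by rewrite -mulrN1z lamMz mulrN1z. Qed.

Lemma lam0 y : lam 0 y = y.
Proof. by rewrite /lam subr0 -{1}brace_one0 (brace_mul1l HA). Qed.

Lemma lamM u v y : lam (mul u v) y = lam u (lam v y).
Proof.
have mulN : mul u (- v) - u - u = - mul u v.
  have := brace_law HA u v (- v); rewrite subrr brace_mulr0 => E.
  by rewrite {3}E opprB addrA subrK opprD addrCA subrr addr0.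
by rewrite /lam -(brace_mulA HA) (brace_law HA) -!addrA [mul u (- v) + _]addrA mulN.
Qed.

Lemma lamVK u y : lam (inv u) (lam u y) = y.
Proof. by rewrite -lamM (brace_mulVl HA) brace_one0 lam0. Qed.

Lemma star_addr u y y' : star u (y + y') = star u y + star u y'.
Proof. by rewrite !star_lam lamD opprD addrACA. Qed.

Lemma star_mulrz u y (k : int) : star u (y *~ k) = star u y *~ k.
Proof. exact: (additive_mulrz (star_addr u)). Qed.

Lemma subbrace_lam (S : A -> Prop) : additive_subgroup S ->
    (forall x y, S x -> S y -> S (lam x y)) ->
    (forall x y, S x -> S y -> S (lam (inv x) y)) ->
  subbrace mul one inv S.
Proof.
move=> subS Slam SlamV; have [S0 SB] := subS.
have invE x : inv x = - lam (inv x) x.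
  by apply/eqP; rewrite -addr_eq0 -mul_lam (brace_mulVl HA) brace_one0.
split=> //; first by rewrite brace_one0.
  by move=> x y Sx Sy; rewrite mul_lam; apply: subgroupD => //; apply: Slam.
by move=> x Sx; rewrite invE; apply: subgroupN => //; apply: SlamV.
Qed.

Lemma center_lamr z y : Z z -> lam z y = y.
Proof. by move=> /(_ y) [/eqP]; rewrite subr_eq0 => /eqP. Qed.

Lemma center_laml z y : Z z -> lam y z = z.
Proof. by move=> /(_ y) [_ /eqP]; rewrite subr_eq0 => /eqP. Qed.

Lemma lam_addl_center z v y : Z z -> lam (z + v) y = lam v y.
Proof. by move=> Zz; rewrite -{1}(center_lamr v Zz) -mul_lam lamM center_lamr. Qed.

Lemma center_subgroup : additive_subgroup Z.
Proof.
split=> [y | z z' Zz Zz' y]; first by rewrite !star_lam lam0 /lam brace_mulr0 !subrr.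
rewrite !star_lam lam_addl_center // -(lam_addl_center _ _ Zz') subrr lam0 subrr.
by rewrite lamD lamN !center_laml // subrr.
Qed.

Lemma center0 : Z 0.
Proof. exact: center_subgroup.1. Qed.

Lemma centerB z z' : Z z -> Z z' -> Z (z - z').
Proof. exact: center_subgroup.2. Qed.

Lemma centerD z z' : Z z -> Z z' -> Z (z + z').
Proof. exact: (subgroupD center_subgroup). Qed.

Lemma centerMz z k : Z z -> Z (z *~ k).
Proof. exact: (subgroupMz center_subgroup). Qed.

Section StarCenter2.

Variable a : A.
Hypothesis a_starl : forall y, Z (star a y).
Hypothesis a_starr : forall y, Z (star y a).

Local Notation c := (star a a).

(* a (a *~ n) = a *~ (n + 1) modulo the central c *~ n, so lam (a *~ k) is the
   k-th iterate of lam a : y |-> y + star a y, and lam a fixes the central star a y. *)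
Lemma lam_mulrz k y : lam (a *~ k) y = y + star a y *~ k.
Proof.
have lamS (n : int) : lam (a *~ (n + 1)) y = lam a (lam (a *~ n) y).
  have E : mul a (a *~ n) = c *~ n + a *~ (n + 1).
    by rewrite mul_lam lamMz lam_star mulrzDl mulrzDr mulr1z addrC addrCA addrA.
  by rewrite -lamM E lam_addl_center //; apply/centerMz/a_starl.
have step (n : int) : lam a (y + star a y *~ n) = y + star a y *~ (n + 1).
  rewrite lamD lamMz (center_laml a (a_starl y)) lam_star mulrzDr mulr1z.
  by rewrite -addrA [_ + star a y]addrC.
elim/int_rec: k => [|n IH|n IH]; first by rewrite !mulr0z lam0 addr0.
  by rewrite intS addrC lamS IH step.
have negSn : - n.+1%:Z + 1 = - n%:Z by rewrite intS opprD addrAC addNr add0r.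
have E : lam a (y + star a y *~ - n.+1%:Z) = lam a (lam (a *~ - n.+1%:Z) y).
  by rewrite step -lamS negSn IH.
by have := congr1 (lam (inv a)) E; rewrite !lamVK => ->.
Qed.

Lemma star_mulrz_addl k z y : Z z -> star (a *~ k + z) y = star a y *~ k.
Proof.
move=> Zz; rewrite star_lam [a *~ k + z]addrC lam_addl_center // lam_mulrz.
by rewrite addrAC subrr add0r.
Qed.

Definition cyclic_center (y : A) := exists k z, Z z /\ y = a *~ k + z.

Definition cyclic_pair (y : A) := exists k m, y = a *~ k + c *~ m.

Lemma center_cyclic_center z : Z z -> cyclic_center z.
Proof. by move=> Zz; exists 0, z; rewrite mulr0z add0r. Qed.

Lemma cyclic_pair_cyclic_center y : cyclic_pair y -> cyclic_center y.
Proof.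
move=> [k [m ->]]; exists k, (c *~ m); split=> //.
exact/centerMz/a_starl.
Qed.

Lemma cyclic_center_subgroup : additive_subgroup cyclic_center.
Proof.
split=> [|_ _ [k [z [Zz ->]]] [k' [z' [Zz' ->]]]].
  exact/center_cyclic_center/center0.
exists (k - k'), (z - z'); split; first exact: centerB.
by rewrite mulrzBr opprD addrACA.
Qed.

Lemma cyclic_pair_subgroup : additive_subgroup cyclic_pair.
Proof.
split=> [|_ _ [k [m ->]] [k' [m' ->]]]; first by exists 0, 0; rewrite !mulr0z addr0.
by exists (k - k'), (m - m'); rewrite !mulrzBr opprD addrACA.
Qed.

Lemma lam_cyclic_center x y : cyclic_center y -> cyclic_center (lam x y).
Proof.
move=> [k [z [Zz ->]]]; exists k, (star x a *~ k + z); split.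
  exact/centerD/Zz/centerMz/a_starr.
by rewrite lamD lamMz (center_laml x Zz) lam_star mulrzDl -addrA.
Qed.

Lemma star_cyclic_center_a u : cyclic_center u -> exists k, star u a = c *~ k.
Proof. by move=> [k [z [Zz ->]]]; exists k; rewrite star_mulrz_addl. Qed.

Lemma lam_cyclic_pair x y : cyclic_center x -> cyclic_pair y -> cyclic_pair (lam x y).
Proof.
move=> /star_cyclic_center_a [k Ek] [k' [m' ->]]; exists k', (k * k' + m').
rewrite lamD !lamMz (center_laml x (a_starl a)) lam_star Ek.
by rewrite mulrzDl mulrzDr mulrzA -addrA.
Qed.

Lemma ideal_cyclic_center : ideal_of mul one inv (fun _ => True) cyclic_center.
Proof.
have subJ := cyclic_center_subgroup.
split=> // [|u _ _ [k [z [Zz ->]]]].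
  by apply: subbrace_lam => // x y _; apply: lam_cyclic_center.
split; last by rewrite star_mulrz_addl //; apply/center_cyclic_center/centerMz.
rewrite star_lam; apply: subJ.2; first apply: lam_cyclic_center; by exists k, z.
Qed.

Lemma ideal_cyclic_pair : ideal_of mul one inv cyclic_center cyclic_pair.
Proof.
have subI := cyclic_pair_subgroup; have [subJ _ _] := ideal_cyclic_center.
split=> [||u y Ju Iy]; [|exact: cyclic_pair_cyclic_center|split].
- apply: subbrace_lam => // x y Ix Iy; apply: lam_cyclic_pair => //.
    exact: cyclic_pair_cyclic_center.
  by case: subJ => _ _ _ _; apply; apply: cyclic_pair_cyclic_center.
- by rewrite star_lam; apply: subI.2 => //; apply: lam_cyclic_pair.
- case: Iy => k' [m' ->]; rewrite star_mulrz_addl; last first.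
    exact/centerMz/a_starl.
  case: Ju => k [z [Zz ->]]; rewrite star_addr star_mulrz.
  have [_ ->] := Zz a; exists 0, (k * k').
  by rewrite mulr0z add0r addr0 mulrzA.
Qed.

Lemma center_mulrz_star_eq0 k x :
  Z (a *~ k) -> star x a *~ k = 0 /\ star a x *~ k = 0.
Proof.
move=> /(_ x) [akx0 xak0]; rewrite -star_mulrz xak0.
by rewrite -(star_mulrz_addl k x center0) addr0 akx0.
Qed.

Hypothesis a_inf : forall n : nat, (0 < n)%N -> a *+ n != 0.

Lemma center_cyclic_pair_in_cyclic w : Z w -> cyclic_pair w ->
  (forall k, Z (a *~ k) -> w *~ k = 0) -> in_cyclic c w.
Proof.
move=> Zw [k [m Ew]] wk0.
have Zak : Z (a *~ k).
  rewrite (_ : a *~ k = w - c *~ m); last by rewrite Ew addrK.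
  exact/centerB/centerMz/a_starl.
have ck0 : c *~ k = 0 by rewrite -star_mulrz; have [] := Zak a.
have : a *~ (k * k) = 0.
  by rewrite -(wk0 k Zak) Ew mulrzDl [c *~ _ *~ _]mulrzAC ck0 mul0rz addr0 mulrzA.
move=> /(mulrz_eq0_infinite_order a_inf) /eqP; rewrite mulf_eq0 orbb => /eqP k0.
by exists m; rewrite Ew k0 mulr0z add0r.
Qed.

Hypothesis ideal_pair : ideal_of mul one inv (fun _ => True) cyclic_pair.

Lemma star_in_cyclic x : in_cyclic c (star x a) /\ in_cyclic c (star a x).
Proof.
have [_ _ /(_ x a Logic.I)] := ideal_pair.
case=> [|Ixa Iax]; first by exists 1, 0; rewrite mulr0z addr0.
split; apply: center_cyclic_pair_in_cyclic => // k /(center_mulrz_star_eq0 x) [] //.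
Qed.

End StarCenter2.

End Brace.

Unset Implicit Arguments.

Theorem lemma4p3 (A : zmodType) (mul : A -> A -> A) (one : A) (inv : A -> A)
  (HA : is_brace mul one inv) (HT : T_brace mul one inv) (a : A)
  (Ha : star_center2 mul a)
  (Hinf : forall n : nat, (0 < n)%N -> a *+ n != 0) :
  forall x : A, in_cyclic (star mul a a) (star mul x a) /\
                in_cyclic (star mul a a) (star mul a x).
Proof.
move=> x.
have a_starl y : star_center mul (star mul a y) by case: (Ha y).
have a_starr y : star_center mul (star mul y a) by case: (Ha y).
apply: (star_in_cyclic HA a_starl a_starr Hinf).
exact: HT (ideal_cyclic_center HA a_starl a_starr) (ideal_cyclic_pair HA a_starl a_starr).
Qed.
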